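(* For every permutation $w\in S_n$, $\mathsf{rajcode}(w)=\mathsf{rajcode}(RD(w))$.
   Context: For $w\in S_n$, $\mathsf{Inv}(w)=\{(i,j):i<j,\ w(i)>w(j)\}$ and the Rothe diagram is $RD(w)=\{(r,w(r')):(r,r')\in\mathsf{Inv}(w)\}$. Let $\mathrm{LIS}^w(q)$ be the length of the longest increasing subsequence of the one-line notation of $w$ starting with $q$. $\mathsf{rajcode}(w)$ is the weak composition with $r$-th entry $n+1-r-\mathrm{LIS}^w(w(r))$ for $r\in[n]$ and $0$ for $r>n$. A diagram is a finite subset of $\mathbb{Z}_{>0}\times\mathbb{Z}_{>0}$; $(r,c)$ is in row $r$ (row 1 on top), column $c$. The snow diagram $\mathsf{snow}(D)$: iterate through the rows of $D$ from bottom to top; in row $r$, find the rightmost cell $(r,c)\in D$ such that column $c$ contains no dark cloud yet; if it exists, label it a dark cloud and add a snowflake cell at $(r',c)$ for each $r'<r$ with $(r',c)\notin D$. $\mathsf{rajcode}(D)$ is the weak composition whose $i$-th entry is the number of cells (original cells plus snowflakes) in row $i$ of $\mathsf{snow}(D)$. *)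

From mathcomp Require Import all_boot all_fingroup.
From mathcomp Require Import finmap.
Set Implicit Arguments. Unset Strict Implicit. Unset Printing Implicit Defensive.
Local Open Scope fset_scope.

(* w : 'S_n acts on 'I_n = {0..n-1}; position r (1-based) holds value w(r),
   where w(r) := (w (r-1)).+1 \in [1..n]; w(r) := 0 outside [1..n]. *)
Definition pval (n : nat) (w : 'S_n) (r : nat) : nat :=
  match @insub nat (fun k => k < n) 'I_n r.-1 with
  | Some i => (w i).+1
  | None => 0
  end.

Definition oneline (n : nat) (w : 'S_n) : seq nat := [seq (w i).+1 | i <- enum 'I_n].

Definition inv_pairs (n : nat) (w : 'S_n) : seq ('I_n * 'I_n) :=
  [seq y : 'I_n * 'I_n <- enum [set: ('I_n * 'I_n)%type] | (y.1 < y.2) && (w y.2 < w y.1)].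

Definition Inv (n : nat) (w : 'S_n) : {fset nat * nat} :=
  [fset x in [seq (((x.1 : 'I_n) : nat).+1, ((x.2 : 'I_n) : nat).+1) | x <- inv_pairs w]].

Definition RD (n : nat) (w : 'S_n) : {fset nat * nat} :=
  [fset (x.1, pval w x.2) | x in Inv w].

Definition LIS (n : nat) (w : 'S_n) (q : nat) : nat :=
  \max_(m : n.-tuple bool |
          (head 0 (mask m (oneline w)) == q) && sorted ltn (mask m (oneline w)))
     size (mask m (oneline w)).

Definition rajcode_perm (n : nat) (w : 'S_n) (r : nat) : nat :=
  if (1 <= r <= n) then n.+1 - r - LIS w (pval w r) else 0.

Definition diagram := {fset nat * nat}.

Definition maxrow (D : diagram) : nat := \max_(x <- enum_fset D) x.1.

(* Process rows r, r-1, ..., 1 (bottom to top), given the list [acc] of dark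
   clouds already found in lower rows; returns all dark clouds. *)
Fixpoint clouds_from (D : diagram) (r : nat) (acc : seq (nat * nat))
  : seq (nat * nat) :=
  match r with
  | 0 => acc
  | r'.+1 =>
      let cands := [seq x.2 | x <- enum_fset D &
                              (x.1 == r) && (x.2 \notin [seq y.2 | y <- acc])] in
      let acc' := if cands is [::] then acc
                  else (r, \max_(c <- cands) c) :: acc in
      clouds_from D r' acc'
  end.

Definition dark_clouds (D : diagram) : seq (nat * nat) :=
  clouds_from D (maxrow D) [::].

Definition snowflakes (D : diagram) : seq (nat * nat) :=
  flatten [seq [seq (r', x.2) | r' <- iota 1 x.1.-1 & (r', x.2) \notin D]
          | x <- dark_clouds D].

Definition snow (D : diagram) : diagram := D `|` [fset x in snowflakes D].

Definition rajcode_diag (D : diagram) (i : nat) : nat :=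
  #|` [fset x in snow D | x.1 == i]|.

From Pilot Require Import Defs.
From mathcomp Require Import all_boot all_fingroup.
From mathcomp Require Import finmap.
From mathcomp Require Import zify.
Set Implicit Arguments. Unset Strict Implicit. Unset Printing Implicit Defensive.

(* Let s be the one-line notation of w.  An increasing subsequence starting at
   position i is s_i followed by an increasing subsequence of the suffix
   t_i = s_(i+1) ... s_n with all entries above s_i, so LIS^w(s_i) - 1 is the
   length lis_above t_i s_i of a longest such subsequence.  Row i of RD(w)
   consists of the entries c of t_i with c < s_i.  Let U_i be the columns of the
   dark clouds found strictly below row i; then row i of snow(RD(w)) is
   {c in t_i | c < s_i or c in U_i}.  The algorithm maintains the invariant
   that, for every v, the entries of t_i above v that are not in U_i are exactly
   lis_above t_i v in number: processing row i prepends q = s_i to the suffix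
   and adds to U the column of the dark cloud of row i, if any, which is the
   largest uncovered entry of t_i below q; this exactly absorbs the change of
   lis_above caused by q.  Taking v = s_i, row i of the snow diagram has
   (n - i) - lis_above t_i s_i cells. *)

Fixpoint lis_above (t : seq nat) (v : nat) : nat :=
  if t is x :: t' then
    if v < x then maxn (lis_above t' v) (lis_above t' x).+1 else lis_above t' v
  else 0.

Lemma leq_lis_above_cons t x v : lis_above t v <= lis_above (x :: t) v.
Proof. by rewrite /=; case: ifP => // _; apply: leq_maxl. Qed.

Lemma lis_above_max t v u : subseq u t -> sorted ltn u -> all (fun x => v < x) u ->
  size u <= lis_above t v.
Proof.
elim: t v u => [|x t IH] v [|y u] //= u_sub u_sorted /andP[v_lt_y u_gt_v].
case: eqP u_sub => [<- | _] u_sub.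
- rewrite v_lt_y; apply: leq_trans (leq_maxr _ _); rewrite ltnS.
  by move: u_sorted; rewrite (path_sortedE ltn_trans) => /andP[? ?]; apply: IH.
- apply: leq_trans (leq_lis_above_cons t x v).
  by apply: (IH v (y :: u)) => //=; rewrite v_lt_y.
Qed.

Lemma lis_above_witness t v : exists u, [/\ subseq u t, sorted ltn u,
  all (fun x => v < x) u & size u = lis_above t v].
Proof.
elim: t v => [|x t IH] v /=; first by exists [::].
have [u [u_sub u_sorted u_gt_v u_size]] := IH v.
have u_sub' : subseq u (x :: t) by apply: subseq_trans u_sub (subseq_cons t x).
case: ltnP => v_lt_x; last by exists u.
case: (leqP (lis_above t x).+1 (lis_above t v)) => lis_cmp.
  by exists u.
have [u' [u'_sub u'_sorted u'_gt_x u'_size]] := IH x.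
exists (x :: u'); split => /=.
- by rewrite eqxx.
- by rewrite (path_sortedE ltn_trans) u'_gt_x u'_sorted.
- by rewrite v_lt_x; apply/allP => y /(allP u'_gt_x); apply: ltn_trans.
- by rewrite u'_size.
Qed.

Lemma subseq_cons_cat (T : eqType) (a b u : seq T) x : x \notin a ->
  subseq (x :: u) (a ++ x :: b) -> subseq u b.
Proof.
elim: a => [|y a IH] /=; first by rewrite eqxx.
by rewrite inE negb_or => /andP[/negbTE-> /IH].
Qed.

Section OneLine.
Variables (n : nat) (w : 'S_n).
Local Notation s := (oneline w).

Lemma size_oneline : size s = n.
Proof. by rewrite size_map size_enum_ord. Qed.

Lemma nth_oneline (a : 'I_n) : nth 0 s a = (w a).+1.
Proof. by rewrite (nth_map a) ?size_enum_ord // nth_ord_enum. Qed.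

Lemma oneline_uniq : uniq s.
Proof. by rewrite map_inj_uniq ?enum_uniq // => a b [] /val_inj /perm_inj. Qed.

Lemma oneline_gt0 x : x \in s -> 0 < x.
Proof. by case/mapP => a _ ->. Qed.

Lemma pval_oneline r : 0 < r <= n -> Defs.pval w r = nth 0 s r.-1.
Proof.
case: r => // r /= r_lt_n.
rewrite /Defs.pval /= (insubT (fun k => k < n) r_lt_n).
by rewrite -(nth_oneline (Ordinal r_lt_n)).
Qed.

Lemma LIS_oneline i : 0 < i <= n ->
  LIS w (nth 0 s i.-1) = (lis_above (drop i s) (nth 0 s i.-1)).+1.
Proof.
case: i => // i /= i_lt_n.
have i_lt_s : i < size s by rewrite size_oneline.
set q := nth 0 s i.
have s_split : s = take i s ++ q :: drop i.+1 s.
  by rewrite -(drop_nth 0 i_lt_s) cat_take_drop.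
have q_notin_prefix : q \notin take i s.
  by move: oneline_uniq; rewrite {1}s_split cat_uniq /= negb_or => /and4P[_ /andP[]].
apply/eqP; rewrite eqn_leq; apply/andP; split.
- apply/bigmax_leqP => m /andP[/eqP mask_head mask_sorted].
  have := mask_subseq m s; move: mask_head mask_sorted.
  case: (mask m s) => [|y u] /= => [q0 | -> u_sorted u_sub].
    by have := oneline_gt0 (mem_nth 0 i_lt_s); rewrite -/q -q0.
  move: u_sorted; rewrite (path_sortedE ltn_trans) ltnS => /andP[u_gt_q u_sorted].
  apply: lis_above_max u_gt_q => //.
  by move: u_sub; rewrite {1}s_split; apply: subseq_cons_cat.
- have [u [u_sub u_sorted u_gt_q u_size]] := lis_above_witness (drop i.+1 s) q.
  have : subseq (q :: u) s.
    rewrite {1}s_split -[q :: u]cat0s cat_subseq ?sub0seq //=.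
    by rewrite eqxx.
  case/subseqP => m m_size qu_mask.
  have m_size' : size m == n by rewrite m_size size_oneline.
  apply: leq_trans (leq_bigmax_cond (Tuple m_size') _); last first.
    by rewrite /= -qu_mask /= eqxx (path_sortedE ltn_trans) u_gt_q u_sorted.
  by rewrite /= -qu_mask /= u_size.
Qed.

End OneLine.

Definition free_above (U t : seq nat) (v : nat) : nat :=
  count (fun x => (v < x) && (x \notin U)) t.

Lemma free_above_split U t v q : q \notin t -> v <= q ->
  free_above U t v =
  free_above U t q + count (fun x => [&& v < x, x < q & x \notin U]) t.
Proof.
rewrite /free_above => + v_le_q; elim: t => //= x t IH.
rewrite inE negb_or => /andP[x_neq_q /IH->].
by case: (x \in U); rewrite /= ?andbF ?andbT //; move/eqP: x_neq_q; lia.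
Qed.

Lemma free_above_cover U t v p : uniq t -> p \in t -> p \notin U ->
  free_above (p :: U) t v + (v < p) = free_above U t v.
Proof.
move=> t_uniq p_in_t p_notin_U.
rewrite /free_above [RHS](seq.permP (perm_to_rem p_in_t)) /= p_notin_U andbT.
rewrite addnC rem_filter // count_filter; congr (_ + _).
by apply: eq_count => x; rewrite /= inE negb_or -andbA [_ && (x != p)]andbC.
Qed.

Lemma count_below_or_in U t q : q \notin t ->
  count (fun c => (c < q) || (c \in U)) t = size t - free_above U t q.
Proof.
move=> q_notin_t.
have -> : free_above U t q = count (predC (fun c => (c < q) || (c \in U))) t.
  apply: eq_in_count => c c_in_t /=; rewrite negb_or -leqNgt ltn_neqAle.
  by case: (eqVneq q c) => [q_eq | //]; rewrite q_eq c_in_t in q_notin_t.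
by rewrite -[size t](count_predC (fun c => (c < q) || (c \in U))) addnK.
Qed.

Definition lis_profile (U t : seq nat) : Prop :=
  forall v, free_above U t v = lis_above t v.

Lemma lis_profile_cons_covered U t q :
  q \notin t -> {subset U <= t} -> lis_profile U t ->
  (forall c, c \in t -> c < q -> c \in U) ->
  lis_profile U (q :: t).
Proof.
move=> q_notin_t U_sub t_free below_covered v.
have q_notin_U : q \notin U by apply: contra q_notin_t; apply: U_sub.
rewrite /free_above /= q_notin_U andbT -/(free_above U t v) t_free.
case: (ltnP v q) => //= v_lt_q.
have window0 : count (fun x => [&& v < x, x < q & x \notin U]) t = 0.
  rewrite (eq_in_count (a2 := pred0)) ?count_pred0 // => x x_in_t /=.
  by apply/and3P => -[_ x_q /negP x_U]; apply: x_U (below_covered x x_in_t x_q).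
have := free_above_split U q_notin_t (ltnW v_lt_q).
rewrite window0 addn0 !t_free => ->.
by rewrite /maxn ltnSn add1n.
Qed.

Lemma lis_profile_cons_cloud U t q p :
  q \notin t -> uniq t -> {subset U <= t} -> lis_profile U t ->
  p \in t -> p < q -> p \notin U ->
  (forall c, c \in t -> c < q -> c \notin U -> c <= p) ->
  lis_profile (p :: U) (q :: t).
Proof.
move=> q_notin_t t_uniq U_sub t_free p_in_t p_lt_q p_notin_U p_max v.
have q_notin_pU : q \notin p :: U.
  rewrite inE negb_or; apply/andP; split; first by apply: contraNneq q_notin_t => ->.
  by apply: contra q_notin_t; apply: U_sub.
have covered := free_above_cover v t_uniq p_in_t p_notin_U.
rewrite t_free in covered.
rewrite /free_above /= q_notin_pU andbT -/(free_above (p :: U) t v).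
case: (ltnP v q) => /= v_q; last first.
  by rewrite -covered ltnNge (leq_trans (ltnW p_lt_q) v_q) addn0.
have := free_above_split U q_notin_t (ltnW v_q); rewrite !t_free.
set window := count _ t.
case: (ltnP v p) => v_p.
- have window_pos : 0 < window.
    by rewrite -has_count; apply/hasP; exists p => //; rewrite v_p p_lt_q.
  move: covered; rewrite v_p /maxn.
  by case: (ltnP (lis_above t v) (lis_above t q).+1) => /=; lia.
- have window0 : window = 0.
    rewrite /window (eq_in_count (a2 := pred0)) ?count_pred0 // => x x_in_t /=.
    apply/and3P => -[v_x x_q x_U]; have := p_max x x_in_t x_q x_U; lia.
  move: covered; rewrite window0 ltnNge v_p /maxn.
  by case: (ltnP (lis_above t v) (lis_above t q).+1) => /=; lia.
Qed.

Local Open Scope fset_scope.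

Definition columns (acc : seq (nat * nat)) : seq nat := [seq y.2 | y <- acc].

Definition cloud_candidates (D : diagram) (r : nat) (acc : seq (nat * nat)) :=
  [seq x.2 | x <- enum_fset D & (x.1 == r) && (x.2 \notin columns acc)].

Definition cloud_step (D : diagram) (r : nat) (acc : seq (nat * nat)) :=
  if cloud_candidates D r acc is [::] then acc
  else (r, \max_(c <- cloud_candidates D r acc) c) :: acc.

Fixpoint lower_clouds (D : diagram) (N k : nat) : seq (nat * nat) :=
  if k is k'.+1 then cloud_step D (N - k') (lower_clouds D N k') else [::].

Lemma max_mem (l : seq nat) : l != [::] -> \max_(c <- l) c \in l.
Proof.
elim: l => // x [|y l] IH _; first by rewrite big_seq1 mem_head.
rewrite big_cons inE; move: IH => /(_ isT).
set m := \max_(c <- y :: l) c => m_in.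
by rewrite /maxn; case: ltnP => _; rewrite ?m_in ?orbT ?eqxx.
Qed.

Section Clouds.
Variable D : diagram.

Lemma clouds_from_step r acc :
  clouds_from D r.+1 acc = clouds_from D r (cloud_step D r.+1 acc).
Proof. by []. Qed.

Lemma mem_cloud_candidates r acc c :
  (c \in cloud_candidates D r acc) = ((r, c) \in D) && (c \notin columns acc).
Proof.
apply/mapP/andP => [[[a b]] | [rc_in_D c_new]].
- by rewrite mem_filter /= => /andP[/andP[/eqP-> c_new] ?] ->.
- by exists (r, c); rewrite // mem_filter /= eqxx c_new.
Qed.

Lemma cloud_step_empty_row r acc :
  (forall x, x \in D -> x.1 != r) -> cloud_step D r acc = acc.
Proof.
move=> row_empty; rewrite /cloud_step /cloud_candidates.
suff -> : [seq x <- enum_fset D | (x.1 == r) && (x.2 \notin columns acc)] = [::].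
  by [].
apply/eqP; rewrite -size_eq0 size_filter -leqn0 leqNgt -has_count.
by apply/hasPn => x x_in_D; rewrite (negbTE (row_empty x x_in_D)).
Qed.

Lemma mem_cloud_step r acc y :
  y \in cloud_step D r acc -> (y \in acc) \/ y.1 = r.
Proof.
rewrite /cloud_step; case: cloud_candidates => [|a l]; first by left.
by rewrite inE => /orP[/eqP-> | ]; [right | left].
Qed.

Lemma cloud_step_sub r acc : {subset acc <= cloud_step D r acc}.
Proof.
by rewrite /cloud_step; case: cloud_candidates => // a l y y_in; rewrite inE y_in orbT.
Qed.

Lemma clouds_from_empty_rows m k acc : (forall x, x \in D -> x.1 <= m) ->
  clouds_from D (m + k) acc = clouds_from D m acc.
Proof.
move=> rows_le; elim: k acc => [|k IH] acc; first by rewrite addn0.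
rewrite addnS clouds_from_step cloud_step_empty_row ?IH // => x /rows_le.
by apply: contraTneq => ->; lia.
Qed.

Lemma clouds_from_lower N k : k <= N ->
  clouds_from D N [::] = clouds_from D (N - k) (lower_clouds D N k).
Proof.
elim: k => [|k IH] k_le_N; first by rewrite subn0.
rewrite IH ?(ltnW k_le_N) //; have -> : N - k = (N - k.+1).+1 by lia.
by rewrite clouds_from_step /=; congr (clouds_from _ _ (cloud_step _ _ _)); lia.
Qed.

Lemma dark_clouds_lower N : (forall x, x \in D -> x.1 <= N) ->
  dark_clouds D = lower_clouds D N N.
Proof.
move=> rows_le_N.
have rows_le_max x : x \in D -> x.1 <= maxrow D.
  by move=> x_in_D; apply: (leq_bigmax_seq (F := fun x => x.1)).
have max_le_N : maxrow D <= N by apply/bigmax_leqP_seq => x /rows_le_N.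
rewrite /dark_clouds -(clouds_from_empty_rows (N - maxrow D) [::] rows_le_max).
by rewrite subnKC // (clouds_from_lower (leqnn N)) subnn.
Qed.

Lemma lower_clouds_sub N k k' : k <= k' ->
  {subset lower_clouds D N k <= lower_clouds D N k'}.
Proof.
elim: k' => [|k' IH]; first by rewrite leqn0 => /eqP->.
rewrite leq_eqVlt => /orP[/eqP-> // | /IH k_sub y /k_sub].
exact: cloud_step_sub.
Qed.

Lemma lower_clouds_rows N k (y : nat * nat) :
  k <= N -> y \in lower_clouds D N k -> N - k < y.1 <= N.
Proof.
elim: k => [|k IH] //= k_le_N /mem_cloud_step [/(IH (ltnW k_le_N)) | ->]; lia.
Qed.

Lemma lower_clouds_rows_split N k k' (y : nat * nat) :
  k <= k' -> y \in lower_clouds D N k' -> (y \in lower_clouds D N k) \/ y.1 <= N - k.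
Proof.
elim: k' y => [|k' IH] y; first by rewrite leqn0 => /eqP->; left.
rewrite leq_eqVlt => /orP[/eqP-> | k_le_k']; first by left.
by move=> /mem_cloud_step [/IH | ->]; [apply | right; lia].
Qed.

Lemma mem_snow i c : 0 < i -> ((i, c) \in snow D) =
  ((i, c) \in D) || has (fun y => (i < y.1) && (y.2 == c)) (dark_clouds D).
Proof.
move=> i_gt0; rewrite in_fsetU inE; case ic_in_D: ((i, c) \in D) => //=.
apply/flattenP/hasP => [[l /mapP[y y_cloud ->]] | [y y_cloud /andP[i_lt /eqP c_eq]]].
- case/mapP=> r'; rewrite mem_filter mem_iota => /and3P[_ r'_gt0 r'_lt] [-> ->].
  exists y; rewrite // eqxx andbT; move: r'_gt0 r'_lt.
  by case: (y.1) => [|m] r'_gt0; rewrite add1n ltnS // => /(leq_trans r'_gt0).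
- exists [seq (r', y.2) | r' <- iota 1 y.1.-1 & (r', y.2) \notin D].
    by apply/mapP; exists y.
  apply/mapP; exists i; last by rewrite c_eq.
  rewrite mem_filter mem_iota c_eq ic_in_D i_gt0 add1n prednK //.
  exact: leq_ltn_trans i_lt.
Qed.

End Clouds.

Lemma card_row (A : {fset nat * nat}) i (t : seq nat) : uniq t ->
  (forall c, (i, c) \in A -> c \in t) ->
  #|` [fset x in A | x.1 == i]| = count (fun c => (i, c) \in A) t.
Proof.
move=> t_uniq row_sub.
have -> : [fset x in A | x.1 == i] =
          [fset x in [seq (i, c) | c <- t & (i, c) \in A]].
  apply/fsetP => -[r c]; rewrite !inE /=.
  apply/andP/mapP => [[rc_in /eqP r_eq] | [c' + [-> ->]]].
    by subst r; exists c; rewrite // mem_filter rc_in row_sub.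
  by rewrite mem_filter => /andP[-> _].
rewrite card_fseq undup_id ?size_map ?size_filter //.
by rewrite map_inj_uniq ?filter_uniq // => ? ? [].
Qed.

Lemma drop_pred_nth (T : Type) (x0 : T) (s : seq T) i : 0 < i <= size s ->
  drop i.-1 s = nth x0 s i.-1 :: drop i s.
Proof. by case: i => // i /= i_lt; apply: drop_nth. Qed.

Lemma mem_nth_drop (T : eqType) (x0 : T) (s : seq T) r j :
  r <= j < size s -> nth x0 s j \in drop r s.
Proof.
case/andP=> r_le_j j_lt; rewrite -(subnKC r_le_j) -nth_drop mem_nth //.
by rewrite size_drop ltn_sub2r // (leq_ltn_trans r_le_j).
Qed.

Section RotheDiagram.
Variables (s : seq nat) (D : diagram).
Hypothesis s_uniq : uniq s.
Hypothesis mem_D : forall r c, ((r, c) \in D) =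
  [&& 0 < r, r <= size s, c \in drop r s & c < nth 0 s r.-1].
Local Notation N := (size s).

Lemma nth_notin_drop i : 0 < i <= N -> nth 0 s i.-1 \notin drop i s.
Proof.
move=> i_range; have := drop_uniq i.-1 s_uniq.
by rewrite (drop_pred_nth 0 i_range) /= => /andP[].
Qed.

Lemma lower_clouds_profile k : k <= N ->
  {subset columns (lower_clouds D N k) <= drop (N - k) s} /\
  lis_profile (columns (lower_clouds D N k)) (drop (N - k) s).
Proof.
elim: k => [|k IH] k_le_N; first by rewrite subn0 drop_oversize.
have [U_sub U_free] := IH (ltnW k_le_N).
set r := N - k in U_sub U_free *.
have r_range : 0 < r <= N by rewrite /r; lia.
have -> : N - k.+1 = r.-1 by rewrite /r; lia.
rewrite (drop_pred_nth 0 r_range) /= -/r /cloud_step.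
set q := nth 0 s r.-1; set acc := lower_clouds D N k in U_sub U_free *.
have q_notin := nth_notin_drop r_range.
have t_uniq := drop_uniq r s_uniq.
have mem_cands c : (c \in cloud_candidates D r acc) =
    [&& c \in drop r s, c < q & c \notin columns acc].
  by rewrite mem_cloud_candidates mem_D andbA r_range /= -andbA.
case cands: (cloud_candidates D r acc) => [|c0 l].
- split; first by move=> y /U_sub y_in; rewrite inE y_in orbT.
  apply: lis_profile_cons_covered => // c c_in c_lt_q; apply/negPn/negP => c_new.
  by have := mem_cands c; rewrite cands c_in c_lt_q c_new.
- set p := \max_(c <- c0 :: l) c.
  have : p \in cloud_candidates D r acc by rewrite cands; apply: max_mem.
  rewrite mem_cands => /and3P[p_in p_lt_q p_new].
  split.
    by move=> y; rewrite /= !inE => /orP[/eqP-> | /U_sub->]; rewrite ?p_in ?orbT.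
  apply: lis_profile_cons_cloud => // c c_in c_lt_q c_new.
  by apply: (leq_bigmax_seq (F := id)); rewrite -?cands ?mem_cands ?c_in ?c_lt_q.
Qed.

Lemma rothe_rows_le x : x \in D -> x.1 <= N.
Proof. by case: x => r c; rewrite mem_D => /and4P[]. Qed.

Lemma mem_snow_rothe i c : 0 < i <= N -> ((i, c) \in snow D) =
  (c \in drop i s) &&
  ((c < nth 0 s i.-1) || (c \in columns (lower_clouds D N (N - i)))).
Proof.
case/andP=> i_gt0 i_le_N; have k_le_N := leq_subr i N.
have [U_sub _] := lower_clouds_profile k_le_N.
have i_eq : N - (N - i) = i by apply: subKn.
rewrite i_eq in U_sub.
rewrite mem_snow // (dark_clouds_lower rothe_rows_le) mem_D i_gt0 i_le_N /=.
have -> : has (fun y => (i < y.1) && (y.2 == c)) (lower_clouds D N N) =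
          (c \in columns (lower_clouds D N (N - i))).
  apply/hasP/mapP => [[y y_in /andP[i_lt /eqP <-]] | [y y_in ->]].
    exists y => //; case: (lower_clouds_rows_split k_le_N y_in) => //.
    by rewrite i_eq leqNgt i_lt.
  exists y; first exact: (lower_clouds_sub k_le_N).
  by have := lower_clouds_rows k_le_N y_in; rewrite i_eq eqxx andbT => /andP[].
set U := columns _.
by case: (boolP (c \in U)) => [/U_sub-> | _]; rewrite ?orbT ?orbF ?andbT.
Qed.

Lemma snow_rothe_row_gt i c : N < i -> (i, c) \notin snow D.
Proof.
move=> N_lt_i; rewrite mem_snow ?(leq_ltn_trans _ N_lt_i) //.
rewrite mem_D (leqNgt i) N_lt_i andbF /= (dark_clouds_lower rothe_rows_le).
apply/hasPn => y /(lower_clouds_rows (leqnn N)) /andP[_ y_le_N].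
by rewrite ltnNge (ltnW (leq_ltn_trans y_le_N N_lt_i)).
Qed.

Lemma snow_rothe_row_card i : 0 < i <= N ->
  #|` [fset x in snow D | x.1 == i]| = N - i - lis_above (drop i s) (nth 0 s i.-1).
Proof.
move=> i_range.
have [_ U_free] := lower_clouds_profile (leq_subr i N).
rewrite subKn in U_free; last by case/andP: i_range.
rewrite (card_row (t := drop i s)) ?drop_uniq //; last first.
  by move=> c; rewrite mem_snow_rothe // => /andP[].
under eq_count => c do rewrite mem_snow_rothe //.
rewrite (eq_in_count (a2 := fun c => (c < nth 0 s i.-1) ||
                        (c \in columns (lower_clouds D N (N - i))))); last first.
  by move=> c /= ->.
by rewrite count_below_or_in ?nth_notin_drop // U_free size_drop.
Qed.

End RotheDiagram.

Section RothePerm.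
Variables (n : nat) (w : 'S_n).
Local Notation s := (oneline w).

Lemma mem_RD r c : ((r, c) \in RD w) =
  [&& 0 < r, r <= size s, c \in drop r s & c < nth 0 s r.-1].
Proof.
rewrite size_oneline; apply/idP/idP.
- case/imfsetP => -[a b] /= + [-> ->]; rewrite inE => /mapP[[a' b']] + [-> ->].
  rewrite mem_filter /= => /andP[/andP[a'_lt_b' w_lt] _].
  rewrite pval_oneline ?ltn_ord //= !nth_oneline ltnS w_lt andbT.
  by rewrite -nth_oneline mem_nth_drop // a'_lt_b' size_oneline /=.
- case/and4P => r_gt0 r_le_n /(nthP 0)[j]; rewrite size_drop size_oneline nth_drop.
  move=> j_lt c_eq c_lt.
  have a_lt : r.-1 < n by lia.
  have b_lt : r + j < n by lia.
  apply/imfsetP; exists (r, (r + j).+1) => /=.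
    rewrite inE; apply/mapP; exists (Ordinal a_lt, Ordinal b_lt); last first.
      by rewrite /= prednK.
    rewrite mem_filter mem_enum in_setT andbT /=.
    move: c_lt; rewrite -c_eq (nth_oneline w (Ordinal b_lt)).
    by rewrite (nth_oneline w (Ordinal a_lt)) ltnS => ->; rewrite andbT; lia.
  by rewrite pval_oneline; [congr pair; apply/esym: c_eq | lia].
Qed.

End RothePerm.

Theorem theorem5p5 (n : nat) (w : 'S_n) :
  forall i : nat, 0 < i -> rajcode_perm w i = rajcode_diag (RD w) i.
Proof.
move=> i i_gt0; rewrite /rajcode_perm /rajcode_diag.
have s_uniq := oneline_uniq w; have mem_D := @mem_RD n w.
case: (leqP i n) => [i_le_n | n_lt_i].
- have i_range : 0 < i <= n by rewrite i_gt0.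
  rewrite i_gt0 pval_oneline // LIS_oneline //.
  by rewrite (snow_rothe_row_card s_uniq mem_D) size_oneline //=; lia.
- rewrite andbF (card_row (t := [::])) // => c.
  by apply: contraTT => _; apply: snow_rothe_row_gt; rewrite // size_oneline.
Qed.
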